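(* Let $X$ and $Y$ be connected finite undirected graphs, each with $n$ vertices, and let $p>n$ be a prime. Let $Z$ be the disjoint union of $p$ connected components $Z_1,\ldots,Z_p$, where $Z_i$ is an isomorphic copy of $X$ for each $1\le i<p$ and $Z_p$ is an isomorphic copy of $Y$. If the cyclic group $\mathbb{Z}/p\mathbb{Z}$ is representable on $Z$, then $X$ and $Y$ are isomorphic.
   Context: For a graph $W$, $\mathrm{Aut}(W)$ denotes its automorphism group (permutations of the vertex set mapping edges to edges and non-edges to non-edges). A finite group $G$ is said to be representable on a graph $W$ if there exists a nontrivial homomorphism from $G$ to $\mathrm{Aut}(W)$ (i.e. one not mapping every element to the identity). *)

From mathcomp Require Import all_boot all_order all_algebra all_fingroup.
Set Implicit Arguments. Unset Strict Implicit. Unset Printing Implicit Defensive.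

Definition simple_graph (V : finType) (e : rel V) : Prop :=
  symmetric e /\ irreflexive e.

Definition graph_connected (V : finType) (e : rel V) : Prop :=
  forall x y : V, connect e x y.

Definition graph_iso (V1 V2 : finType) (e1 : rel V1) (e2 : rel V2) : Prop :=
  exists f : V1 -> V2, bijective f /\ forall x y, e2 (f x) (f y) = e1 x y.

Definition is_aut (W : finType) (e : rel W) (s : {perm W}) : Prop :=
  forall x y, e (s x) (s y) = e x y.

Definition Zp_representable (p : nat) (W : finType) (e : rel W) : Prop :=
  exists f : 'Z_p -> {perm W},
    (forall a b : 'Z_p, f (a + b)%R = (f a * f b)%g) /\
    (forall a, is_aut e (f a)) /\
    (exists a, f a != 1%g).

Definition union_vertex (p : nat) (VX VY : finType) : finType :=
  (('I_p.-1 * VX) + VY)%type.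

Definition union_rel (p : nat) (VX VY : finType) (eX : rel VX) (eY : rel VY)
  : rel (union_vertex p VX VY) :=
  fun u v => match u, v with
             | inl (i, x), inl (j, y) => (i == j) && eX x y
             | inr x, inr y => eY x y
             | _, _ => false
             end.
Arguments union_rel p {VX VY} eX eY.
Arguments Zp_representable p {W} e.

From mathcomp Require Import all_boot all_order all_algebra all_fingroup.

Set Implicit Arguments.
Unset Strict Implicit.
Unset Printing Implicit Defensive.

(* Some vertex u has trivial stabiliser in Z/pZ: a nontrivial stabiliser is all of
   Z/pZ, as p is prime, and the action is nontrivial.  The orbit of u then meets
   each connected component at most once, for otherwise a nonzero element, hence
   all of Z/pZ, would keep u inside its component, which has fewer than p
   vertices.  The union has exactly p components, so the orbit meets all of them,
   and the automorphism carrying a vertex of a copy of X to one of Y carries the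
   whole (connected) copy of X injectively into Y. *)

Import GRing.Theory.

Lemma connect_homo (T T' : finType) (e : rel T) (e' : rel T') (h : T -> T') :
  {homo h : x y / e x y >-> e' x y} ->
  forall x y, connect e x y -> connect e' (h x) (h y).
Proof.
move=> hom x _ /connectP[q e_q ->]; apply/connectP.
by exists (map h q); [exact: homo_path e_q | rewrite last_map].
Qed.

Lemma connect_invariant (T : finType) (T' : eqType) (e : rel T) (k : T -> T') :
  (forall x y, e x y -> k x = k y) -> forall x y, connect e x y -> k x = k y.
Proof.
move=> ek x _ /connectP[q e_q ->].
by elim: q x e_q => //= y q IHq x /andP[/ek -> /IHq].
Qed.

Lemma aut_connect (W : finType) (e : rel W) (s : {perm W}) :
  is_aut e s -> forall x y, connect e x y -> connect e (s x) (s y).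
Proof. by move=> aut_s; apply: connect_homo => x y; rewrite aut_s. Qed.

Lemma card_Zp_ord (p : nat) : 1 < p -> #|'Z_p| = p.
Proof. by move=> p_gt1; rewrite card_ord Zp_cast. Qed.

Lemma Zp_unit_prime (p : nat) (d : 'Z_p) : prime p -> d != 0%R -> d \is a GRing.unit.
Proof.
move=> p_pr d_neq0; have p_gt1 := prime_gt1 p_pr.
rewrite -(natr_Zp d) unitZpE // prime_coprime // gtnNdvd //.
  by rewrite lt0n; apply: contraNneq d_neq0 => d0; apply/eqP/val_inj.
by rewrite -[p in _ < p]Zp_cast.
Qed.

Section ZpPermAction.

Local Open Scope ring_scope.

Variables (p : nat) (W : finType) (f : 'Z_p -> {perm W}).
Hypothesis p_pr : prime p.
Hypothesis fD : forall a b, f (a + b) = (f a * f b)%g.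

Lemma Zp_actD a b x : f (a + b) x = f b (f a x).
Proof. by rewrite fD permM. Qed.

Lemma Zp_act0 x : f 0 x = x.
Proof. by apply: (@perm_inj _ (f 0)); rewrite -Zp_actD addr0. Qed.

Lemma Zp_actK a x : f (- a) (f a x) = x.
Proof. by rewrite -Zp_actD subrr Zp_act0. Qed.

Lemma Zp_orbit_rel (R : rel W) (d : 'Z_p) u :
  (forall a x y, R x y -> R (f a x) (f a y)) -> reflexive R -> transitive R ->
  d != 0 -> R u (f d u) -> forall c, R u (f c u).
Proof.
move=> Rf Rxx Rtr d_neq0 Rud.
have Rmuln k : R u (f (d *+ k) u).
  elim: k => [|k IHk]; first by rewrite mulr0n Zp_act0.
  by apply: Rtr IHk _; rewrite mulrS Zp_actD; apply: Rf.
move=> c; have d_unit := Zp_unit_prime p_pr d_neq0.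
(* c = d * (d^-1 * c) is a natural multiple of d. *)
by rewrite -[c](mulVKr d_unit) -[d^-1 * c]natr_Zp mulr_natr.
Qed.

Lemma Zp_orbit_injective : (exists a, f a != 1%g) ->
  exists u, injective (fun a => f a u).
Proof.
case=> a0 fa0_neq1.
have [/existsP[u /injectiveP]|] := boolP [exists u, injectiveb (fun a => f a u)].
  by exists u.
rewrite negb_exists => /forallP noninj; case/eqP: fa0_neq1.
apply/permP => u; rewrite perm1.
have /injectivePn[a [b a_neq_b fab]] := noninj u.
have fix_u : u == f (b - a) u by rewrite Zp_actD -fab Zp_actK.
apply/esym/eqP; apply: (Zp_orbit_rel (R := eq_op)) fix_u a0.
- by move=> c x y /eqP->.
- exact: eqxx.
- by move=> x y z /eqP-> /eqP->.
- by rewrite subr_eq0 eq_sym.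
Qed.

Lemma Zp_orbit_separates_components (e : rel W) u :
  (forall a, is_aut e (f a)) -> (forall x, #|connect e x| < p)%N ->
  injective (fun a => f a u) ->
  forall a b, connect e (f a u) (f b u) -> a = b.
Proof.
move=> aut_f small_comp inj_u a b conn_ab; apply/eqP/negPn/negP => a_neq_b.
have conn_d : connect e u (f (b - a) u).
  rewrite Zp_actD -{1}(Zp_actK a u).
  exact: (aut_connect (aut_f (- a)) conn_ab).
have conn_orbit := Zp_orbit_rel (fun c => aut_connect (aut_f c)) (@connect0 _ e)
  (@connect_trans _ e) _ conn_d.
have := small_comp u; rewrite -(card_Zp_ord (prime_gt1 p_pr)) -(card_image inj_u).
rewrite ltnNge subset_leq_card //; apply/subsetP => _ /imageP[c _ ->].
by rewrite inE conn_orbit // subr_eq0 eq_sym.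
Qed.

End ZpPermAction.

Section UnionGraph.

Variables (p : nat) (VX VY : finType) (eX : rel VX) (eY : rel VY).

Local Notation Z := (union_vertex p VX VY).
Local Notation eZ := (union_rel p eX eY).

Definition union_comp (w : Z) : option 'I_p.-1 :=
  if w is inl (i, _) then Some i else None.

Lemma connect_union_comp (w w' : Z) : connect eZ w w' -> union_comp w = union_comp w'.
Proof.
by apply: connect_invariant => -[[i x]|y] [[j x']|y'] //= /andP[/eqP->].
Qed.

Lemma card_union_class (w : Z) : (#|connect eZ w| <= maxn #|VX| #|VY|)%N.
Proof.
case: w => [[i x]|y].
  apply: leq_trans (leq_maxl _ _).
  apply: leq_trans (leq_image_card (fun x => inl (i, x) : Z) VX).
  apply: subset_leq_card; apply/subsetP => -[[j x']|y'] /connect_union_comp //= [<-].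
  exact: image_f.
apply: leq_trans (leq_maxr _ _).
apply: leq_trans (leq_image_card (@inr (_ * VX) _) VY).
apply: subset_leq_card; apply/subsetP => -[[j x']|y'] /connect_union_comp //= _.
exact: image_f.
Qed.

Lemma connect_union_inl i x x' :
  connect eX x x' -> connect eZ (inl (i, x)) (inl (i, x')).
Proof.
by apply: (connect_homo (h := fun x => inl (i, x) : Z)) => x1 x2 /= ->; rewrite eqxx.
Qed.

Lemma connect_union_inr y y' : connect eY y y' -> connect eZ (inr y) (inr y').
Proof. exact: (connect_homo (h := inr)). Qed.

Lemma union_comp_connect (w w' : Z) :
  graph_connected eX -> graph_connected eY ->
  union_comp w = union_comp w' -> connect eZ w w'.
Proof.
move=> connX connY; case: w w' => [[i x]|y] [[j x']|y'] //=.
  by case=> <-; apply: connect_union_inl.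
by move=> _; apply: connect_union_inr.
Qed.

Lemma graph_iso_of_union_aut (s : {perm Z}) j x0 y0 :
  graph_connected eX -> #|VX| = #|VY| -> is_aut eZ s ->
  s (inl (j, x0)) = inr y0 -> graph_iso eX eY.
Proof.
move=> connX cardXY aut_s sx0.
have copy_to_Y x : union_comp (s (inl (j, x))) = None.
  have conn_x := connect_union_inl j (connX x0 x).
  by rewrite -(connect_union_comp (aut_connect aut_s conn_x)) sx0.
pose F x := if s (inl (j, x)) is inr y then y else y0.
have sF x : s (inl (j, x)) = inr (F x).
  by rewrite /F; move: (copy_to_Y x); case: (s (inl (j, x))) => [[]|].
exists F; split => [|x x'].
  apply: inj_card_bij => [x x' Fxx'|]; last by rewrite cardXY.
  by have /perm_inj[] : s (inl (j, x)) = s (inl (j, x')) by rewrite !sF Fxx'.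
by rewrite -[eY _ _]/(eZ (inr (F x)) (inr (F x'))) -!sF aut_s /= eqxx.
Qed.

End UnionGraph.

Theorem mainTheorem2 (n p : nat) (VX VY : finType) (eX : rel VX) (eY : rel VY) :
  simple_graph eX -> simple_graph eY ->
  graph_connected eX -> graph_connected eY ->
  #|VX| = n -> #|VY| = n ->
  prime p -> n < p ->
  Zp_representable p (union_rel p eX eY) ->
  graph_iso eX eY.
Proof.
move=> _ _ connX connY cardX cardY p_pr n_lt_p [f [fD [aut_f nontriv]]].
have p_gt1 := prime_gt1 p_pr.
have [u inj_u] := Zp_orbit_injective p_pr fD nontriv.
have small_comp w : #|connect (union_rel p eX eY) w| < p.
  by apply: leq_ltn_trans n_lt_p; rewrite -(maxnn n) -{1}cardX -cardY card_union_class.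
have inj_comp : injective (fun a => union_comp (f a u)).
  move=> a b /(union_comp_connect connX connY).
  exact: (Zp_orbit_separates_components p_pr fD aut_f small_comp inj_u).
have comp_onto o : exists a, union_comp (f a u) = o.
  have /codomP[a ->] : o \in codom (fun a => union_comp (f a u)).
    apply: inj_card_onto inj_comp _ o.
    by rewrite card_option card_ord card_Zp_ord // prednK // ltnW.
  by exists a.
have [a comp_a] := comp_onto None.
have pred_p_gt0 : 0 < p.-1 by rewrite ltn_predRL.
have [b comp_b] := comp_onto (Some (Ordinal pred_p_gt0)).
move: comp_a comp_b; case fa: (f a u) => [[? ?]|y0] // _.
case fb: (f b u) => [[j x0]|?] // _.
have copy_to_Y : f (a - b)%R (inl (j, x0)) = inr y0.
  by rewrite -fb -(Zp_actD fD) addrC subrK.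
by apply: (graph_iso_of_union_aut connX _ (aut_f _) copy_to_Y); rewrite cardX cardY.
Qed.
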